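(* Let $F$ be a $2$-dimensional freezing cellular automaton with neighborhood $\mathrm{VN}_2$, let $c$ be a configuration, $z\in\mathbb{Z}^2$ and $t\geq1$ with $F^t(c)_z\neq c_z$. Then there exist a position $z'$ which is unstable in $c$ and a changing path of length at most $t$ from $z$ to $z'$ between the configurations $c$ and $F^t(c)$.
   Context: A $2$-dimensional cellular automaton is $F=(2,Q,N,f)$ with $Q$ finite, $N\subset\mathbb{Z}^2$ finite, $f:Q^N\to Q$, global map $F(c)_z=f(c|_{z+N})$; it is freezing if there is a partial order $\preceq$ on $Q$ with $F(c)_z\preceq c_z$ for all $c,z$. $\mathrm{VN}_2=\{(0,0),(\pm1,0),(0,\pm1)\}$. A position $z$ is stable in $c$ if $F(c)_z=c_z$ and unstable otherwise. A changing path from $z$ to $z'$ between configurations $c$ and $F^t(c)$ is a sequence $z_1,\dots,z_n$ of positions with $z_1=z$, $z_n=z'$, $z_{i+1}\in z_i+\mathrm{VN}_2$ for all $i<n$, and $c_{z_i}\neq F^t(c)_{z_i}$ for all $i$; its length is $n$. *)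

From Stdlib Require Import ZArith List.
Import ListNotations.
Open Scope Z_scope.

Definition pos := (Z * Z)%type.
Definition config (Q : Type) := pos -> Q.
Definition padd (a b : pos) : pos := (fst a + fst b, snd a + snd b).

Inductive vn := VC | VE | VW | VN | VS.
Definition voff (d : vn) : pos :=
  match d with
  | VC => (0, 0) | VE => (1, 0) | VW => (-1, 0) | VN => (0, 1) | VS => (0, -1)
  end.
Definition in_VN2 (v : pos) : Prop := exists d, v = voff d.

Definition finite_type (Q : Type) : Prop := exists l : list Q, forall q, In q l.

Definition global {Q : Type} (f : (vn -> Q) -> Q) (c : config Q) : config Q :=
  fun z => f (fun d => c (padd z (voff d))).

Definition iterF {Q : Type} (f : (vn -> Q) -> Q) (t : nat) (c : config Q) : config Q :=
  Nat.iter t (global f) c.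

Definition partial_order {Q : Type} (le : Q -> Q -> Prop) : Prop :=
  (forall x, le x x) /\
  (forall x y, le x y -> le y x -> x = y) /\
  (forall x y z, le x y -> le y z -> le x z).

Definition freezing {Q : Type} (f : (vn -> Q) -> Q) : Prop :=
  exists le : Q -> Q -> Prop, partial_order le /\
    forall (c : config Q) (z : pos), le (global f c z) (c z).

Definition unstable {Q : Type} (f : (vn -> Q) -> Q) (c : config Q) (z : pos) : Prop :=
  global f c z <> c z.

Definition changing_path {Q : Type} (c c' : config Q) (p : list pos) (z z' : pos) : Prop :=
  (1 <= length p)%nat /\
  nth 0 p (0, 0) = z /\
  nth (length p - 1) p (0, 0) = z' /\
  (forall i, (S i < length p)%nat ->
     exists d, nth (S i) p (0, 0) = padd (nth i p (0, 0)) (voff d)) /\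
  (forall i, (i < length p)%nat -> c (nth i p (0, 0)) <> c' (nth i p (0, 0))).

(* Freezing forbids a cell from leaving a state and returning to it, so a cell
   differing between c and F^t(c) has changed for good, and a cell that changes
   from F(c) onwards already differs between c and F^t(c).  Induct on t: if z is
   stable in c, the induction hypothesis for F(c) gives a changing path from z
   to a cell z2 unstable in F(c).  If z2 is stable in c, some neighbour of z2
   must change in the first step; it is unstable in c and extends the path by
   one cell. *)

From Stdlib Require Import ZArith List Lia Classical FunctionalExtensionality.
Import ListNotations.

Lemma iterF_succ_r {Q : Type} (f : (vn -> Q) -> Q) (n : nat) (c : config Q) :
  iterF f (S n) c = iterF f n (global f c).
Proof.
  unfold iterF; induction n as [|n IH]; simpl; [reflexivity|].
  simpl in IH; rewrite IH; reflexivity.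
Qed.

Lemma global_neighbor_differs {Q : Type} (f : (vn -> Q) -> Q) (c1 c2 : config Q) (x : pos) :
  global f c1 x <> global f c2 x -> exists d, c1 (padd x (voff d)) <> c2 (padd x (voff d)).
Proof.
  intros Hx; apply NNPP; intros Hnone; apply Hx.
  unfold global; f_equal; apply functional_extensionality; intros d.
  apply NNPP; intros Hd; apply Hnone; exists d; exact Hd.
Qed.

Section ChangingPaths.

Variables (Q : Type) (c c' : config Q).

Lemma changing_path_singleton (z : pos) : c z <> c' z -> changing_path c c' [z] z z.
Proof.
  intros Hz; repeat split; simpl; auto.
  - intros i Hi; lia.
  - intros i Hi; destruct i; [exact Hz | lia].
Qed.

Lemma changing_path_snoc (p : list pos) (z z' : pos) (d : vn) :
  changing_path c c' p z z' ->
  c (padd z' (voff d)) <> c' (padd z' (voff d)) ->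
  changing_path c c' (p ++ [padd z' (voff d)]) z (padd z' (voff d)).
Proof.
  intros [Hlen [Hhd [Hlast [Hstep Hdiff]]]] Hw.
  unfold changing_path; rewrite length_app; simpl.
  repeat split.
  - lia.
  - rewrite app_nth1 by lia; exact Hhd.
  - rewrite app_nth2 by lia.
    replace (length p + 1 - 1 - length p)%nat with 0%nat by lia; reflexivity.
  - intros i Hi; destruct (Nat.lt_ge_cases (S i) (length p)).
    + rewrite !app_nth1 by lia; apply Hstep; exact H.
    + rewrite app_nth2, app_nth1 by lia.
      replace (S i - length p)%nat with 0%nat by lia.
      exists d; replace i with (length p - 1)%nat by lia; rewrite Hlast; reflexivity.
  - intros i Hi; destruct (Nat.lt_ge_cases i (length p)).
    + rewrite app_nth1 by lia; apply Hdiff; exact H.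
    + rewrite app_nth2 by lia.
      replace (i - length p)%nat with 0%nat by lia; exact Hw.
Qed.

Lemma changing_path_weaken (c0 : config Q) (p : list pos) (z z' : pos) :
  (forall x, c0 x <> c' x -> c x <> c' x) ->
  changing_path c0 c' p z z' -> changing_path c c' p z z'.
Proof.
  intros Hsub [Hlen [Hhd [Hlast [Hstep Hdiff]]]]; repeat split; auto.
Qed.

End ChangingPaths.

Section Freezing.

Variables (Q : Type) (f : (vn -> Q) -> Q) (le : Q -> Q -> Prop).
Hypothesis le_order : partial_order le.
Hypothesis global_le : forall (c : config Q) (z : pos), le (global f c z) (c z).

Lemma iterF_le (n : nat) (c : config Q) (x : pos) : le (iterF f n c x) (c x).
Proof.
  destruct le_order as [le_refl [_ le_trans]].
  revert c; induction n as [|n IH]; intros c; simpl.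
  - apply le_refl.
  - eapply le_trans; [apply global_le | apply IH].
Qed.

Lemma stable_of_iterF_eq (n : nat) (c : config Q) (x : pos) :
  iterF f (S n) c x = c x -> global f c x = c x.
Proof.
  destruct le_order as [_ [le_antisym _]].
  intros Hret; apply le_antisym; [apply global_le|].
  rewrite <- Hret at 1; rewrite iterF_succ_r; apply iterF_le.
Qed.

Lemma differs_of_global_differs (n : nat) (c : config Q) (x : pos) :
  global f c x <> iterF f (S n) c x -> c x <> iterF f (S n) c x.
Proof.
  intros Hx Hret; apply Hx; rewrite <- Hret.
  apply (stable_of_iterF_eq n); symmetry; exact Hret.
Qed.

Lemma changing_path_to_unstable (n : nat) (c : config Q) (z : pos) :
  iterF f (S n) c z <> c z ->
  exists (z' : pos) (p : list pos),
    unstable f c z' /\ changing_path c (iterF f (S n) c) p z z' /\ (length p <= S n)%nat.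
Proof.
  revert c z; induction n as [|n IH]; intros c z Hz.
  { exists z, [z]; split; [exact Hz | split; [|simpl; lia]].
    apply changing_path_singleton; auto. }
  destruct (classic (global f c z = c z)) as [Hzs|Hzu].
  2:{ exists z, [z]; split; [exact Hzu | split; [|simpl; lia]].
      apply changing_path_singleton; auto. }
  rewrite iterF_succ_r in Hz |- *.
  destruct (IH (global f c) z) as [z2 [p [Hz2 [Hp Hlen]]]]; [congruence|].
  assert (Hp' : changing_path c (iterF f (S n) (global f c)) p z z2).
  { apply (changing_path_weaken _ _ _ (global f c)); [|exact Hp].
    intros x; rewrite <- iterF_succ_r; apply differs_of_global_differs. }
  destruct (classic (global f c z2 = c z2)) as [Hz2s|Hz2u].
  2:{ exists z2, p; auto. }
  destruct (global_neighbor_differs f (global f c) c z2) as [d Hd]; [congruence|].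
  exists (padd z2 (voff d)), (p ++ [padd z2 (voff d)]); split; [exact Hd | split].
  - apply changing_path_snoc; [exact Hp'|].
    intros Hret; apply Hd, (stable_of_iterF_eq (S n)).
    rewrite iterF_succ_r; symmetry; exact Hret.
  - rewrite length_app; simpl; lia.
Qed.

End Freezing.

Theorem mainTheorem8 (Q : Type) (HQ : finite_type Q) (f : (vn -> Q) -> Q)
  (Hfr : freezing f) (c : config Q) (z : pos) (t : nat) (Ht : (1 <= t)%nat)
  (Hz : iterF f t c z <> c z) :
  exists (z' : pos) (p : list pos),
    unstable f c z' /\ changing_path c (iterF f t c) p z z' /\ (length p <= t)%nat.
Proof.
  destruct Hfr as [le [le_order global_le]].
  destruct t as [|n]; [lia|].
  exact (changing_path_to_unstable Q f le le_order global_le n c z Hz).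
Qed.
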